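(* There exist sets $\{E_{\beta,\gamma}:0<\beta<\gamma\le1\}$, $E_{\beta,\gamma}\subset[1,2]$, such that each $E_{\beta,\gamma}$ is $(\beta,\gamma)$-Assouad regular, and there exists a constant $c\ge1$ such that for all $0<\beta<\gamma\le1$, all $\delta\in(0,1)$ and all intervals $I\subset[1,2]$ with $|I|>\delta$, $$N(E_{\beta,\gamma},\delta)\le c\,\delta^{-\beta},\qquad N(E_{\beta,\gamma}\cap I,\delta)\le c\,\big(\tfrac{\delta}{|I|}\big)^{-\gamma}.$$
   Context: $N(E,\delta)$ is the minimal number of intervals of length $\delta$ covering $E$. $\dim_{\mathrm M}E=\inf\{a>0:\exists c\ \forall\delta\in(0,1),\ N(E,\delta)\le c\delta^{-a}\}$. $\dim_{\mathrm A}E=\inf\{a>0:\exists c\text{ such that for all subintervals }I\subset[1,2]\text{ and }\delta\in(0,|I|),\ N(E\cap I,\delta)\le c\delta^{-a}|I|^a\}$. For $\theta\in[0,1]$, $\overline{\dim}_{\mathrm A,\theta}E=\inf\{a>0:\exists c\text{ such that for all }\delta\in(0,1)\text{ and subintervals }I\subset[1,2]\text{ with }|I|\ge\delta^\theta,\ N(E\cap I,\delta)\le c\delta^{-a}|I|^a\}$. A set $E\subset[1,2]$ is $(\beta,\gamma)$-Assouad regular if either $\gamma=0$, or $\dim_{\mathrm M}E=\beta$, $\dim_{\mathrm A}E=\gamma$ and $\overline{\dim}_{\mathrm A,\theta}E=\dim_{\mathrm A}E$ for all $\theta$ with $1>\theta>1-\beta/\gamma$. *)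

From HB Require Import structures.
From mathcomp Require Import all_boot all_order all_algebra.
From mathcomp Require Import all_classical all_reals all_analysis.
Set Implicit Arguments. Unset Strict Implicit. Unset Printing Implicit Defensive.
Import Order.TTheory GRing.Theory Num.Theory.
Local Open Scope classical_set_scope.
Local Open Scope ring_scope.

Section Defs.
Variable R : realType.

Definition icover (s : seq R) (d : R) : set R :=
  [set y | has (fun x => (x <= y) && (y <= x + d)) s].

Definition covnum (E : set R) (d : R) : R :=
  inf [set (size s)%:R | s in [set s : seq R | E `<=` icover s d]].

Definition dimM (E : set R) : R :=
  inf [set a | 0 < a /\ exists c : R, forall d, 0 < d < 1 ->
        covnum E d <= c * d `^ (- a)].

Definition dimA (E : set R) : R :=
  inf [set a | 0 < a /\ exists c : R, forall l r, 1 <= l -> l < r -> r <= 2 ->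
        forall d, 0 < d < r - l ->
        covnum (E `&` `[l, r]) d <= c * d `^ (- a) * (r - l) `^ a].

Definition udimA (theta : R) (E : set R) : R :=
  inf [set a | 0 < a /\ exists c : R, forall d, 0 < d < 1 ->
        forall l r, 1 <= l -> l <= r -> r <= 2 -> d `^ theta <= r - l ->
        covnum (E `&` `[l, r]) d <= c * d `^ (- a) * (r - l) `^ a].

Definition assouad_regular (beta gamma : R) (E : set R) : Prop :=
  gamma = 0 \/
  [/\ dimM E = beta, dimA E = gamma &
      forall theta, 0 <= theta -> 1 - beta / gamma < theta -> theta < 1 ->
        udimA theta E = dimA E].

End Defs.

(* The sets are Cantor sets with contraction ratio rho = 2^(-1/gamma), so that a
   block of level n has length rho^n and (rho^n)^(-gamma) = 2^n. Passing from level i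
   to level i + 1, every block keeps its left piece of length rho^(i+1), and also its
   right piece when digit i is selected. So N(E, rho^n) is about 2 to the number of
   selected digits below n, and an interval of length rho^k meets at most three blocks
   of level k, each containing at most 2^(n-k) blocks of level n: the local bound with
   exponent gamma holds whatever digits are selected.
   Digits are selected greedily, keeping at most (beta/gamma) n selected digits below n,
   which gives the global bound with exponent beta. Selection is switched off on gaps
   [A_j, (j+1) A_j) with A_(j+1) = (j+1)^2 A_j; after a long gap the greedy rule selects
   every digit until the count catches up with (beta/gamma) n. Such a run [b, n) of
   selected digits, with b/n close to 1 - beta/gamma, makes the local bound sharp on an
   interval of length rho^b (for dim_A, and for the Assouad spectrum at every
   theta > 1 - beta/gamma) and the global bound sharp at scale rho^n (for dim_M). *)

From HB Require Import structures.
From mathcomp Require Import all_boot all_order all_algebra.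
From mathcomp Require Import all_classical all_reals all_analysis.
From mathcomp Require Import ring lra.
Set Implicit Arguments. Unset Strict Implicit. Unset Printing Implicit Defensive.
Import Order.TTheory GRing.Theory Num.Theory.
Local Open Scope classical_set_scope.
Local Open Scope ring_scope.

Lemma uniq_size_le1 (T : eqType) (t : seq T) :
  uniq t -> {in t &, forall x y, x = y} -> (size t <= 1)%N.
Proof.
case: t => [|x [|y t]] //= /andP[xNyt _] t_eq.
have xy : x = y by apply: t_eq; rewrite !inE eqxx ?orbT.
by rewrite xy mem_head in xNyt.
Qed.

Section Covering.
Variable R : realType.
Implicit Types (E : set R) (s t : seq R) (a d : R).

Lemma inf_eq_min (S : set R) x : S x -> lbound S x -> inf S = x.
Proof.
move=> Sx Sx_lb; apply/le_anti/andP; split.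
  by apply: ge_inf Sx; exists x.
by apply: lb_le_inf => //; exists x.
Qed.

Lemma covnum_le_size E d s : E `<=` icover s d -> covnum E d <= (size s)%:R.
Proof.
move=> Es; apply: ge_inf; last by exists s.
by exists 0 => _ [? _ <-].
Qed.

Lemma sep_size_le_itv (n : nat) t a d : uniq t ->
  {in t &, forall x y, x != y -> d <= `|x - y|} ->
  {in t, forall x, a <= x < a + n%:R * d} -> (size t <= n)%N.
Proof.
elim: n t a => [|n IHn] t a t_uniq t_sep t_itv.
  case: t t_itv {t_uniq t_sep} => // x t /(_ x (mem_head _ _)).
  by rewrite mul0r addr0 => /andP[] /le_lt_trans h /h; rewrite ltxx.
pose P x := x < a + d.
rewrite -(count_predC P) -!size_filter -add1n leq_add //.
  apply: uniq_size_le1; first exact: filter_uniq.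
  move=> x y; rewrite !mem_filter => /andP[Px xt] /andP[Py yt].
  apply/eqP; apply: contraT => xNy; have := t_sep _ _ xt yt xNy.
  case/andP: (t_itv _ xt) => ? _; case/andP: (t_itv _ yt) => ? _.
  by rewrite /P in Px Py; rewrite ler_normr => /orP[]; lra.
apply: (IHn _ (a + d)); first exact: filter_uniq.
  by move=> x y; rewrite !mem_filter => /andP[_ ?] /andP[_ ?]; apply: t_sep.
move=> x; rewrite mem_filter /= /P -leNgt => /andP[-> xt] /=.
by case/andP: (t_itv _ xt) => _; rewrite -natr1 mulrDl mul1r; lra.
Qed.

Lemma sep_size_le_cover t s d : uniq t ->
  {in t &, forall x y, x != y -> d < `|x - y|} ->
  {in t, forall x, icover s d x} -> (size t <= size s)%N.
Proof.
elim: s t => [|y s IHs] t t_uniq t_sep t_cov.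
  by case: t t_uniq t_sep t_cov => // x t _ _ /(_ x (mem_head _ _)).
pose P x := (y <= x) && (x <= y + d).
rewrite -(count_predC P) -!size_filter /= -add1n leq_add //.
  apply: uniq_size_le1; first exact: filter_uniq.
  move=> x1 x2; rewrite !mem_filter => /andP[/andP[? ?] x1t] /andP[/andP[? ?] x2t].
  apply/eqP; apply: contraT => x12; have := t_sep _ _ x1t x2t x12.
  by rewrite ltr_normr => /orP[]; lra.
apply: IHs; first exact: filter_uniq.
  by move=> x1 x2; rewrite !mem_filter => /andP[_ ?] /andP[_ ?]; apply: t_sep.
move=> x; rewrite mem_filter => /andP[NPx xt].
by have /orP[Px|] := t_cov _ xt; first by rewrite /= /P Px in NPx.
Qed.

Lemma covnum_ge_sep E d t : (exists s, E `<=` icover s d) -> uniq t ->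
  {in t &, forall x y, x != y -> d < `|x - y|} -> {in t, forall x, E x} ->
  (size t)%:R <= covnum E d.
Proof.
move=> [s0 Es0] t_uniq t_sep tE; apply: lb_le_inf; first by exists (size s0)%:R, s0.
move=> _ [s Es <-]; rewrite ler_nat.
by apply: (@sep_size_le_cover t s d) => // x xt; apply: Es; apply: tE.
Qed.

End Covering.

Fixpoint gap_start (j : nat) : nat :=
  if j is j'.+1 then (j'.+1 * (j'.+1 * gap_start j'))%N else 1%N.

Definition gap_digit (i : nat) : bool :=
  `[< exists j, (gap_start j <= i < j.+1 * gap_start j)%N >].

Lemma gap_start_gt0 j : (0 < gap_start j)%N.
Proof. by elim: j => //= j IHj; rewrite !muln_gt0. Qed.

Lemma gap_end_le_next_start j : (j.+1 * gap_start j <= gap_start j.+1)%N.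
Proof. exact: leq_pmull. Qed.

Lemma gap_start_homo : {homo gap_start : j k / (j <= k)%N}.
Proof.
apply: homo_leq leqnn leq_trans _ => j.
by apply: leq_trans (gap_end_le_next_start j); rewrite leq_pmull.
Qed.

Lemma gap_end_homo : {homo (fun j => j.+1 * gap_start j)%N : j k / (j <= k)%N}.
Proof.
apply: homo_leq leqnn leq_trans _ => j.
by apply: leq_trans (gap_end_le_next_start j) _; rewrite leq_pmull.
Qed.

Lemma gap_digit_inside j i : (gap_start j <= i < j.+1 * gap_start j)%N -> gap_digit i.
Proof. by move=> ij; apply/asboolP; exists j. Qed.

Lemma gap_digitN_between j i :
  (j.+1 * gap_start j <= i < gap_start j.+1)%N -> ~~ gap_digit i.
Proof.
case/andP=> ji ij; apply/asboolP => -[k /andP[ki ik]].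
case: (leqP k j) => [kj|jk].
  by have := leq_trans (gap_end_homo kj) ji; rewrite leqNgt ik.
by have := leq_trans (gap_start_homo jk) ki; rewrite leqNgt ij.
Qed.

Section Selection.
Variable R : realType.
Variable p : R.
Hypothesis p_gt0 : 0 < p.
Hypothesis p_lt1 : p < 1.

Fixpoint nsel (n : nat) : nat :=
  if n is n'.+1 then
    addn (nsel n') (~~ gap_digit n' && ((nsel n').+1%:R <= p * n'.+1%:R))
  else 0%N.

Definition sel (i : nat) : bool := ~~ gap_digit i && ((nsel i).+1%:R <= p * i.+1%:R).

Lemma nselS n : nsel n.+1 = (nsel n + sel n)%N.
Proof. by []. Qed.

Lemma nselD k m : nsel (k + m) = (nsel k + count sel (iota k m))%N.
Proof.
elim: m => [|m IHm]; first by rewrite !addn0.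
by rewrite addnS nselS IHm -addn1 iotaD count_cat /= addn0 addnA.
Qed.

Lemma count_sel_iota0 n : count sel (iota 0 n) = nsel n.
Proof. by rewrite -[in RHS](add0n n) nselD. Qed.

Lemma nsel_le n : (nsel n)%:R <= p * n%:R.
Proof.
elim: n => [|n IHn]; first by rewrite mulr0.
rewrite nselS; case: (boolP (sel n)) => [/andP[_]|_]; first by rewrite addn1.
by rewrite addn0 (le_trans IHn) // ler_wpM2l ?ler_nat // ltW.
Qed.

Lemma nsel_gap j : nsel (j.+1 * gap_start j) = nsel (gap_start j).
Proof.
rewrite mulSn nselD (@eq_in_count _ _ pred0) ?count_pred0 ?addn0 // => i.
by rewrite mem_iota -mulSn => gap_i; rewrite /sel (gap_digit_inside gap_i).
Qed.

Lemma nsel_run b m : (forall i, (b <= i < b + m)%N -> ~~ gap_digit i) ->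
  (nsel b + m)%:R <= p * (b + m)%:R -> nsel (b + m) = (nsel b + m)%N.
Proof.
elim: m => [|m IHm] open_bm le_bm; first by rewrite !addn0.
have IH : nsel (b + m) = (nsel b + m)%N.
  apply: IHm => [i /andP[bi im]|]; first by apply: open_bm; rewrite bi addnS ltnS ltnW.
  move: le_bm; rewrite !addnS -!natr1 !natrD !mulrDr mulr1; have := p_lt1; lra.
rewrite addnS nselS /sel IH open_bm; last by rewrite leq_addr addnS ltnSn.
by rewrite -!addnS le_bm addn1 addnS.
Qed.

Lemma nsel_catch_up b : exists2 n : nat, (b <= n)%N &
  (1 - p) * n%:R <= b%:R - (nsel b)%:R < (1 - p) * n.+1%:R.
Proof.
have q_gt0 : 0 < 1 - p by rewrite subr_gt0.
have nsel_b := nsel_le b.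
have x_ge0 : 0 <= (b%:R - (nsel b)%:R) / (1 - p).
  apply: divr_ge0; last exact: ltW.
  by rewrite subr_ge0 (le_trans nsel_b) // ler_piMl // ltW.
exists (Num.truncn ((b%:R - (nsel b)%:R) / (1 - p))).
  by rewrite truncn_ge_nat // ler_pdivlMr //; move: p_lt1; lra.
have /andP[lo hi] := truncn_itv x_ge0.
by rewrite mulrC -ler_pdivlMr // lo mulrC -ltr_pdivrMr.
Qed.

(* The arithmetic of [long_sel_run]: (j + 1) A is the end of gap j, f the number of
   digits selected before it, and n the point where the greedy count catches up. *)
Lemma run_after_gap_bounds (j A f n th M : R) :
  1 <= A -> 0 <= f <= p * A -> th <= 1 ->
  1 <= (1 - p) * j -> 1 <= (th - (1 - p)) * j -> `|M| + 2 <= p * j ->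
  (1 - p) * n <= (j + 1) * A - f < (1 - p) * (n + 1) ->
  [/\ n <= (j + 1) * ((j + 1) * A), (j + 1) * A <= th * n & M <= n - (j + 1) * A].
Proof.
move=> A_ge1 /andP[f_ge0 f_le] th_le1 j_q j_eta j_M /andP[n_lo n_hi].
have q_gt0 : 0 < 1 - p by rewrite subr_gt0.
have j_ge0 : 0 <= j by nra.
have A_ge0 : 0 <= A by lra.
have b_ge0 : 0 <= (j + 1) * A by nra.
split.
- have : 0 <= (j + 1) * A * ((1 - p) * (j + 1) - 1) by rewrite mulr_ge0 // subr_ge0; nra.
  by rewrite -(ler_pM2l q_gt0); nra.
- have th_ge0 : 0 <= th by nra.
  have : (j + 1 - p) * A - (1 - p) <= (1 - p) * n by lra.
  move=> /(ler_wpM2l th_ge0) le_thn.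
  have : 0 <= A * ((th - (1 - p)) * j - 1) by rewrite mulr_ge0 // subr_ge0.
  have : 0 <= (A - 1) * (p + th * (1 - p)).
    by rewrite mulr_ge0 ?subr_ge0 // addr_ge0 ?mulr_ge0 // ltW.
  by rewrite -(ler_pM2l q_gt0); nra.
- have ppjA_ge0 : 0 <= p * (p * j * A) by rewrite !mulr_ge0 // ltW.
  have : (1 - p) * (p * j * A - 1) < (1 - p) * (n - (j + 1) * A) by nra.
  rewrite ltr_pM2l // => lt_pjA.
  have : 0 <= p * j * (A - 1) by rewrite !mulr_ge0 ?subr_ge0 // ltW.
  have := ler_norm M; nra.
Qed.

Lemma long_sel_run (th M : R) : 1 - p < th -> th <= 1 ->
  exists b n : nat, [/\ (b <= n)%N, b%:R <= th * n%:R, M <= (n - b)%:R,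
    count sel (iota b (n - b)) = (n - b)%N & p * n%:R - 1 <= (nsel n)%:R].
Proof.
move=> th_gt th_le1; have q_gt0 : 0 < 1 - p by rewrite subr_gt0.
have [j [j_q j_eta j_M]] : exists j : nat, [/\ 1 <= (1 - p) * j%:R,
    1 <= (th - (1 - p)) * j%:R & `|M| + 2 <= p * j%:R].
  have eta_gt0 : 0 < th - (1 - p) by rewrite subr_gt0.
  pose X := (1 - p)^-1 + (th - (1 - p))^-1 + (`|M| + 2) / p.
  have X_lt : X < (Num.truncn X).+1%:R := truncnS_gt X.
  have X1 : 0 <= (1 - p)^-1 by rewrite invr_ge0 ltW.
  have X2 : 0 <= (th - (1 - p))^-1 by rewrite invr_ge0 ltW.
  have X3 : 0 <= (`|M| + 2) / p by rewrite divr_ge0 ?addr_ge0 // ltW.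
  exists (Num.truncn X).+1; rewrite /X in X_lt.
  by split; rewrite -ler_pdivrMl // ?mulr1 ?[_ * _ ^-1]mulrC; lra.
(* No digit is selected in the long gap j, so from its end b every digit is selected
   until the catch-up point n, which comes before the next gap. *)
set A := gap_start j; set b := (j.+1 * A)%N.
have A_ge1 : 1 <= A%:R :> R by rewrite ler1n gap_start_gt0.
have f_le : (0 : R) <= (nsel b)%:R <= p * A%:R.
  by rewrite ler0n /b nsel_gap nsel_le.
have b_E : b%:R = (j%:R + 1) * A%:R :> R by rewrite /b natrM -natr1.
have [n b_le_n /andP[n_lo n_hi]] := nsel_catch_up b.
rewrite b_E in n_lo; rewrite -natr1 b_E in n_hi.
have [n_le b_le M_le] := run_after_gap_bounds A_ge1 f_le th_le1 j_q j_eta j_M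
  (introT andP (conj n_lo n_hi)).
rewrite -b_E in b_le M_le; rewrite -b_E natr1 -natrM ler_nat in n_le.
have run : nsel n = (nsel b + (n - b))%N.
  rewrite -{1}(subnKC b_le_n); apply: nsel_run => [i|].
    rewrite subnKC // => /andP[bi /leq_trans i_lt].
    by apply: (gap_digitN_between (j := j)); rewrite bi i_lt.
  rewrite subnKC // natrD natrB //; move: n_lo; rewrite b_E; lra.
exists b, n; split => //.
- by rewrite natrB.
- by apply/eqP; rewrite -(eqn_add2l (nsel b)) -nselD subnKC // run.
- by rewrite run natrD natrB //; move: n_hi; rewrite b_E; lra.
Qed.

End Selection.

Lemma exists_expr_lt (R : realType) (x e : R) :
  0 <= x -> 2 * x <= 1 -> 0 < e -> exists n, x ^+ n < e.
Proof.
move=> x_ge0 x_le e_gt0; set n := Num.truncn e^-1.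
exists n; have e_n : e^-1 < n.+1%:R := truncnS_gt _.
have xn2_le1 : x ^+ n * 2 ^+ n <= 1 by rewrite -exprMn mulrC exprn_ile1 ?mulr_ge0.
have n_le2 : n.+1%:R <= 2 ^+ n :> R by rewrite -natrX ler_nat ltn_expl.
have xn_ge0 : 0 <= x ^+ n := exprn_ge0 n x_ge0.
have e_n1 : 1 < e * n.+1%:R by rewrite -ltr_pdivrMl // mulr1.
have := ler_wpM2l xn_ge0 n_le2.
rewrite -(ltr_pM2r (ltr0Sn _ n)); lra.
Qed.

Lemma exists_expr_bracket (R : realType) (x rho : R) :
  0 < rho -> 2 * rho <= 1 -> 0 < x <= 1 -> exists n, rho ^+ n.+1 < x <= rho ^+ n.
Proof.
move=> rho_gt0 rho_le /andP[x_gt0 x_le1].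
have /ex_minnP[m rho_lt_x m_min] := exists_expr_lt (ltW rho_gt0) rho_le x_gt0.
case: m rho_lt_x m_min => [|n] rho_lt_x m_min.
  by move: rho_lt_x; rewrite expr0 ltNge x_le1.
by exists n; rewrite rho_lt_x leNgt; apply/negP => /m_min; rewrite ltnn.
Qed.

Section CantorSet.
Variable R : realType.
Variable rho : R.
Variable D : nat -> bool.

Definition digit_step (i : nat) : R := (1 - rho) * rho ^+ i.

(* The offsets of the sub-blocks of level k + m in a block of level k. *)
Fixpoint csums (k m : nat) : seq R :=
  if m is m'.+1 then
    if D (k + m') then csums k m' ++ [seq x + digit_step (k + m') | x <- csums k m']
    else csums k m'
  else [:: 0].

(* The left ends of all blocks, shifted into [1, 2]: a dense subset of the compact
   Cantor set, hence with the same covering numbers. *)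
Definition cantor_set : set R :=
  [set x | exists n, exists2 v, v \in csums 0 n & x = 1 + v].

Lemma size_csums k m : size (csums k m) = (2 ^ count D (iota k m))%N.
Proof.
elim: m => [|m IHm] //; rewrite -addn1 iotaD count_cat /= addn0 expnD addn1 /=.
by case: (D (k + m)); rewrite ?size_cat ?size_map IHm ?muln2 ?addnn ?muln1.
Qed.

Lemma csums0 k m : 0 \in csums k m.
Proof. by elim: m => [|m IHm] /=; [rewrite mem_head|case: D; rewrite ?mem_cat IHm]. Qed.

Lemma csumsD k m1 m2 v : v \in csums k (m1 + m2) <->
  exists2 u, u \in csums k m1 & exists2 w, w \in csums (k + m1) m2 & v = u + w.
Proof.
elim: m2 v => [|m IHm] v.
  rewrite addn0; split=> [v_in|[u u_in [w]]].
    by exists v => //; exists 0; rewrite ?addr0 ?mem_head.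
  by rewrite inE => /eqP -> ->; rewrite addr0.
rewrite addnS /= addnA; case: (D (k + m1 + m)); last exact: IHm.
split.
  rewrite mem_cat => /orP[/IHm [u u_in [w w_in ->]]|/mapP[x /IHm [u u_in [w w_in ->]] ->]].
    by exists u => //; exists w; rewrite ?mem_cat ?w_in.
  exists u => //; exists (w + digit_step (k + m1 + m)); last by rewrite addrA.
  by rewrite mem_cat; apply/orP; right; apply: map_f.
move=> [u u_in [w]]; rewrite mem_cat => /orP[w_in ->|/mapP[y y_in ->] ->].
  by rewrite mem_cat (IHm (u + w)).2 //; exists u => //; exists w.
rewrite mem_cat addrA; apply/orP; right; apply: map_f.
by apply/IHm; exists u => //; exists y.
Qed.

Lemma csums_mono k m m' v : (m <= m')%N -> v \in csums k m -> v \in csums k m'.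
Proof.
move=> /subnKC <- v_in; apply/csumsD.
by exists v => //; exists 0; rewrite ?addr0 ?csums0.
Qed.

Lemma cantor_set_csums n u : u \in csums 0 n -> cantor_set (1 + u).
Proof. by move=> u_in; exists n, u. Qed.

Hypothesis rho_gt0 : 0 < rho.
Hypothesis rho_le_half : 2 * rho <= 1.

Lemma csums_bound k m v : v \in csums k m -> 0 <= v <= rho ^+ k - rho ^+ (k + m).
Proof.
have rho_gt := rho_gt0; have rho_le := rho_le_half.
elim: m v => [|m IHm] v /=.
  by rewrite inE addn0 subrr => /eqP ->; rewrite lexx.
have rhoS : rho ^+ (k + m.+1) = rho ^+ (k + m) * rho by rewrite addnS exprSr.
have rho_km : 0 <= rho ^+ (k + m) by rewrite exprn_ge0 // ltW.
case: (D (k + m)); last first.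
  by move=> /IHm/andP[v_ge0 v_le]; rewrite v_ge0 /= rhoS; nra.
rewrite mem_cat => /orP[/IHm/andP[v_ge0 v_le]|].
  by rewrite v_ge0 /= rhoS; nra.
case/mapP=> x /IHm/andP[x_ge0 x_le] ->.
by rewrite /digit_step rhoS; apply/andP; split; nra.
Qed.

Lemma uniq_sep_csums k m : uniq (csums k m) /\
  {in csums k m &, forall x y, x != y -> rho ^+ (k + m) <= `|x - y|}.
Proof.
have rho_gt := rho_gt0; have rho_le := rho_le_half.
elim: m => [|m [IHu IHs]] /=.
  by split => // x y; rewrite !inE => /eqP -> /eqP ->; rewrite eqxx.
have rhoS : rho ^+ (k + m.+1) = rho ^+ (k + m) * rho by rewrite addnS exprSr.
have rho_km : 0 < rho ^+ (k + m) by rewrite exprn_gt0.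
have rho_le_km : rho ^+ (k + m.+1) <= rho ^+ (k + m) by rewrite rhoS; nra.
case: (D (k + m)); last first.
  by split=> // x y x_in y_in xy; apply: le_trans rho_le_km (IHs _ _ x_in y_in xy).
(* With i = k + m: either x = y and the shift (1 - rho) rho^i is at least rho^(i+1),
   or |x - y| is at least rho^i and the shift at most rho^i - rho^(i+1). *)
have cross x y : x \in csums k m -> y \in csums k m ->
    rho ^+ (k + m.+1) <= `|x - (y + digit_step (k + m))|.
  move=> x_in y_in; rewrite /digit_step rhoS opprD addrA.
  have step_ge0 : 0 <= (1 - rho) * rho ^+ (k + m) by nra.
  have := lerB_dist (x - y) ((1 - rho) * rho ^+ (k + m)); rewrite (ger0_norm step_ge0).
  case: (eqVneq x y) => [-> _|xy]; first by rewrite subrr sub0r normrN ger0_norm; nra.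
  by have := IHs _ _ x_in y_in xy; nra.
split.
  rewrite cat_uniq IHu /= (map_inj_uniq (addIr _)) IHu andbT.
  apply/hasPn => _ /mapP[y y_in ->]; apply/negP => y_in'.
  by have := cross _ _ y_in' y_in; rewrite subrr normr0 rhoS; nra.
move=> x y; rewrite !mem_cat.
move=> /orP[x_in|/mapP[x' x_in ->]] /orP[y_in|/mapP[y' y_in ->]] xy.
- exact: le_trans rho_le_km (IHs _ _ x_in y_in xy).
- exact: cross.
- by rewrite distrC; apply: cross.
- rewrite opprD addrACA subrr addr0.
  by apply: le_trans rho_le_km (IHs _ _ x_in y_in _); apply: contraNneq xy => ->.
Qed.

Lemma csums_approx n y : cantor_set y ->
  exists2 u, u \in csums 0 n & 0 <= y - 1 - u <= rho ^+ n.
Proof.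
move=> [N [v v_in ->]].
have : v \in csums 0 (n + (maxn N n - n)).
  by rewrite subnKC ?leq_maxr //; apply: csums_mono v_in; rewrite leq_maxl.
case/csumsD=> u u_in [w /csums_bound/andP[w_ge0 w_le] ->]; exists u => //.
have rho_ge0 : 0 <= rho ^+ (n + (maxn N n - n)) by rewrite exprn_ge0 // ltW.
by rewrite add0n in w_le; apply/andP; split; lra.
Qed.

Lemma cantor_set_sub : cantor_set `<=` `[1, 2].
Proof.
move=> y [n [v /csums_bound/andP[v_ge0 v_le] ->]].
have rho_ge0 : 0 <= rho ^+ n by rewrite exprn_ge0 // ltW.
by rewrite expr0 add0n in v_le; rewrite /= in_itv /=; apply/andP; split; lra.
Qed.

Lemma cantor_set_cover n d : rho ^+ n <= d ->
  cantor_set `<=` icover [seq 1 + u | u <- csums 0 n] d.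
Proof.
move=> rho_le_d y /(csums_approx n) [u u_in /andP[? ?]].
by apply/hasP; exists (1 + u); rewrite ?map_f //; apply/andP; split; lra.
Qed.

Lemma covnum_cantor_le n d : rho ^+ n <= d ->
  covnum cantor_set d <= (2 ^ count D (iota 0 n))%:R.
Proof.
move=> rho_le_d; rewrite -size_csums -(size_map (fun u => 1 + u)).
exact/covnum_le_size/cantor_set_cover.
Qed.

Lemma size_csums_near k l r : r - l <= rho ^+ k ->
  (size [seq u <- csums 0 k | (l - 1 - rho ^+ k <= u <= r - 1)%R] <= 3)%N.
Proof.
move=> rl_le; have [csums_uniq csums_sep] := uniq_sep_csums 0 k.
apply: (@sep_size_le_itv _ 3 _ (l - 1 - rho ^+ k) (rho ^+ k)).
- exact: filter_uniq.
- by move=> x y; rewrite !mem_filter => /andP[_ x_in] /andP[_ y_in]; apply: csums_sep.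
- move=> x; rewrite mem_filter => /andP[/andP[x_ge x_le] _].
  by rewrite x_ge /=; have := rho_gt0; have := exprn_gt0 k rho_gt0; lra.
Qed.

Lemma covnum_cantor_itv_le k n d l r : (k <= n)%N -> rho ^+ n <= d ->
  r - l <= rho ^+ k ->
  covnum (cantor_set `&` `[l, r]) d <= (3 * 2 ^ count D (iota k (n - k)))%:R.
Proof.
move=> k_le_n rho_le_d rl_le.
pose t : seq R := [seq u <- csums 0 k | l - 1 - rho ^+ k <= u <= r - 1].
pose s : seq R := [seq 1 + u + v | u <- t, v <- csums k (n - k)].
apply: (le_trans (@covnum_le_size _ _ _ s _)).
  move=> y [/(csums_approx n) [u0 u0_in /andP[? ?]]]; rewrite /= in_itv /= => /andP[? ?].
  have : u0 \in csums 0 (k + (n - k)) by rewrite subnKC.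
  case/csumsD=> u u_in [v]; rewrite add0n => v_in u0E.
  have /andP[? v_le] := csums_bound v_in.
  rewrite subnKC // in v_le; have ? := exprn_ge0 n (ltW rho_gt0).
  apply/hasP; exists (1 + u + v); last by apply/andP; split; lra.
  by apply: allpairs_f => //; rewrite mem_filter u_in andbT; apply/andP; split; lra.
by rewrite size_allpairs size_csums ler_nat leq_mul2r size_csums_near ?orbT.
Qed.

Lemma cantor_set_coverable E d : E `<=` cantor_set -> 0 < d ->
  exists s, E `<=` icover s d.
Proof.
move=> E_sub d_gt0.
have [n rho_lt_d] := exists_expr_lt (ltW rho_gt0) rho_le_half d_gt0.
exists [seq 1 + u | u <- csums 0 n] => y /E_sub.
exact/cantor_set_cover/ltW.
Qed.

Lemma uniq_sep_shift_csums k m d : d < rho ^+ (k + m) ->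
  uniq [seq 1 + v | v <- csums k m] /\
  {in [seq 1 + v | v <- csums k m] &, forall x y, x != y -> d < `|x - y|}.
Proof.
move=> d_lt; have [csums_uniq csums_sep] := uniq_sep_csums k m.
split; first by rewrite (map_inj_uniq (addrI _)).
move=> _ _ /mapP[x x_in ->] /mapP[y y_in ->] xy.
rewrite opprD addrACA subrr add0r (lt_le_trans d_lt) // csums_sep //.
by apply: contraNneq xy => ->.
Qed.

Lemma covnum_cantor_ge n d : 0 < d -> d < rho ^+ n ->
  (2 ^ count D (iota 0 n))%:R <= covnum cantor_set d.
Proof.
move=> d_gt0 d_lt; rewrite -size_csums -(size_map (fun v => 1 + v)).
have [t_uniq t_sep] := uniq_sep_shift_csums (k := 0) (m := n) d_lt.
apply: covnum_ge_sep t_uniq t_sep _; first exact: cantor_set_coverable.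
by move=> _ /mapP[v v_in ->]; apply: cantor_set_csums v_in.
Qed.

Lemma covnum_cantor_itv_ge k n d : (k <= n)%N -> 0 < d -> d < rho ^+ n ->
  (2 ^ count D (iota k (n - k)))%:R <= covnum (cantor_set `&` `[1, 1 + rho ^+ k]) d.
Proof.
move=> k_le_n d_gt0 d_lt; rewrite -size_csums -(size_map (fun v => 1 + v)).
have [|t_uniq t_sep] := uniq_sep_shift_csums (k := k) (m := n - k) (d := d).
  by rewrite subnKC.
apply: covnum_ge_sep t_uniq t_sep _; first by apply: cantor_set_coverable => // y [].
move=> _ /mapP[v v_in ->]; split.
  apply: (@cantor_set_csums (k + (n - k))); apply/csumsD.
  by exists 0; rewrite ?csums0 //; exists v; rewrite ?add0r.
have /andP[? ?] := csums_bound v_in; have ? := exprn_ge0 (k + (n - k)) (ltW rho_gt0).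
by rewrite /= in_itv /=; apply/andP; split; lra.
Qed.

End CantorSet.

Section PowR.
Variable R : realType.
Implicit Types x y s c : R.

Lemma pow2D x y : 2 `^ (x + y) = 2 `^ x * 2 `^ y :> R.
Proof. by rewrite powRD // pnatr_eq0 implybT. Qed.

Lemma mul_pow2_lt c x y : `|c| / ln 2 < y - x -> c * 2 `^ x < 2 `^ y :> R.
Proof.
move=> lt_yx; have ln2_gt0 : 0 < ln (2 : R) by rewrite ln_gt0 // ltr1n.
rewrite -[y](subrK x) pow2D ltr_pM2r ?powR_gt0 //.
rewrite /powR pnatr_eq0 /=; apply: lt_le_trans (expR_ge1Dx _).
by rewrite ltr_pdivrMr // in lt_yx; have := ler_norm c; lra.
Qed.

Lemma ger_powRN x y s : 0 < x -> x <= y -> 0 <= s -> y `^ (- s) <= x `^ (- s).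
Proof.
move=> x_gt0 x_le_y s_ge0; have y_gt0 := lt_le_trans x_gt0 x_le_y.
rewrite !powRN lef_pV2 ?posrE ?powR_gt0 //.
by apply: ge0_ler_powR; rewrite // nnegrE ltW.
Qed.

Lemma powRN_div x y s : 0 <= x -> 0 < y -> (x / y) `^ (- s) = x `^ (- s) * y `^ s.
Proof.
move=> x_ge0 y_gt0; rewrite powRM ?invr_ge0 ?(ltW y_gt0) //.
by rewrite -powR_inv1 ?(ltW y_gt0) // -powRrM mulN1r opprK.
Qed.

End PowR.

Definition assouad_rho (R : realType) (gamma : R) : R := 2 `^ (- gamma^-1).

Definition assouad_set (R : realType) (beta gamma : R) : set R :=
  cantor_set (assouad_rho gamma) (sel (beta / gamma)).

Section AssouadSet.
Variable R : realType.
Variables beta gamma : R.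
Hypothesis beta_gt0 : 0 < beta.
Hypothesis beta_lt_gamma : beta < gamma.
Hypothesis gamma_le1 : gamma <= 1.

Local Notation p := (beta / gamma).
Local Notation rho := (assouad_rho gamma).
Local Notation E := (assouad_set beta gamma).

Let gamma_gt0 : 0 < gamma. Proof. exact: lt_trans beta_lt_gamma. Qed.
Let p_gt0 : 0 < p. Proof. by rewrite divr_gt0. Qed.
Let p_lt1 : p < 1. Proof. by rewrite ltr_pdivrMr // mul1r. Qed.

Lemma assouad_rho_gt0 : 0 < rho. Proof. exact: powR_gt0. Qed.

Lemma assouad_rho_le_half : 2 * rho <= 1.
Proof.
rewrite -ler_pdivlMl ?ltr0n // mulr1 -powR_inv1 ?ler0n //.
by apply: ler_powR; rewrite ?ler1n // lerN2 invf_ge1.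
Qed.

Lemma rho_expr_powR n s : (rho ^+ n) `^ s = 2 `^ (- (n%:R * s / gamma)).
Proof.
rewrite -powR_mulrn ?(ltW assouad_rho_gt0) // -!powRrM; congr (2 `^ _).
by rewrite mulrC; ring.
Qed.

Lemma rho_expr_powRN n : (rho ^+ n) `^ (- gamma) = 2 ^+ n.
Proof.
rewrite rho_expr_powR mulrN mulNr opprK mulfK ?gt_eqF //.
by rewrite powR_mulrn ?ler0n.
Qed.

Lemma level_powRN x n : rho ^+ n.+1 < x <= rho ^+ n ->
  2 ^+ n <= x `^ (- gamma) < 2 ^+ n.+1.
Proof.
case/andP=> lt_x le_x.
have rho_n1_gt0 : 0 < rho ^+ n.+1 by rewrite exprn_gt0 ?assouad_rho_gt0.
have x_gt0 := lt_trans rho_n1_gt0 lt_x.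
rewrite -!rho_expr_powRN ger_powRN ?(ltW gamma_gt0) //=.
rewrite !powRN ltf_pV2 ?posrE ?powR_gt0 //.
by apply: gt0_ltr_powR; rewrite // nnegrE ltW.
Qed.

Let rho_gt0 := assouad_rho_gt0.
Let rho_le_half := assouad_rho_le_half.
Let rho_le1 : rho <= 1. Proof. by move: rho_gt0 rho_le_half; lra. Qed.

Lemma covnum_assouad_le d : 0 < d < 1 -> covnum E d <= 2 * d `^ (- beta).
Proof.
case/andP=> d_gt0 d_lt1; have d01 : 0 < d <= 1 by rewrite d_gt0 ltW.
have two_ge1 : (1 : R) <= 2 by rewrite ler1n.
have [n d_level] := exists_expr_bracket rho_gt0 rho_le_half d01.
have /andP[d_low _] := level_powRN d_level; case/andP: d_level => lt_d _.
apply: le_trans (covnum_cantor_le (sel p) rho_gt0 rho_le_half (ltW lt_d)) _.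
rewrite count_sel_iota0 natrX -powR_mulrn ?ler0n //.
apply: le_trans (ler_powR two_ge1 (nsel_le p_gt0 n.+1)) _.
rewrite -[n.+1%:R]natr1 mulrDr mulr1 addrC pow2D; apply: ler_pM; rewrite ?powR_ge0 //.
  by rewrite -[X in _ <= X]powRr1 ?ler0n // ler_powR // ltW.
have -> : d `^ (- beta) = (d `^ (- gamma)) `^ p.
  by rewrite -powRrM mulNr mulrC divfK ?gt_eqF.
rewrite [p * _]mulrC [2 `^ _]powRrM powR_mulrn ?ler0n //.
by apply: ge0_ler_powR; rewrite ?nnegrE ?powR_ge0 ?exprn_ge0 // ltW.
Qed.

Lemma covnum_itv_assouad_le d l r : 0 < d -> d <= r - l -> 1 <= l -> r <= 2 ->
  covnum (E `&` `[l, r]) d <= 12 * d `^ (- gamma) * (r - l) `^ gamma.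
Proof.
move=> d_gt0 d_le l_ge1 r_le2.
have rl01 : 0 < r - l <= 1 by rewrite (lt_le_trans d_gt0 d_le); lra.
have d01 : 0 < d <= 1 by rewrite d_gt0; lra.
have [n d_level] := exists_expr_bracket rho_gt0 rho_le_half d01.
have [k rl_level] := exists_expr_bracket rho_gt0 rho_le_half rl01.
have /andP[d_low _] := level_powRN d_level.
have /andP[_ rl_up] := level_powRN rl_level.
case/andP: d_level => lt_d _; case/andP: rl_level => _ rl_le.
have k_le : (k <= n.+1)%N.
  rewrite leqNgt; apply/negP => /ltnW/(ler_wiXn2l (ltW rho_gt0) rho_le1).
  by move: lt_d d_le rl_le; lra.
apply: le_trans (covnum_cantor_itv_le (sel p) rho_gt0 rho_le_half k_le (ltW lt_d) rl_le) _.
apply: (@le_trans _ _ (3 * 2 ^ (n.+1 - k))%:R).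
  rewrite ler_nat leq_mul2l leq_pexp2l //.
  by rewrite -[X in (_ <= X)%N](size_iota k) count_size.
have two_k_neq0 : (2 : R) ^+ k != 0 by rewrite expf_neq0 ?pnatr_eq0.
have -> : (3 * 2 ^ (n.+1 - k))%:R = 12 * 2 ^+ n * (2 ^+ k.+1)^-1 :> R.
  have e : (2 : R) ^+ (n.+1 - k) * 2 ^+ k = 2 * 2 ^+ n by rewrite -exprD subnK // exprS.
  rewrite natrM natrX -[_ ^+ (n.+1 - k)](mulfK two_k_neq0) e exprSr; field.
  by rewrite two_k_neq0.
rewrite -mulrA -[X in _ <= X]mulrA ler_pM2l ?ltr0n //.
apply: ler_pM; rewrite ?exprn_ge0 ?invr_ge0 ?exprn_ge0 //.
have rl_gt0 : 0 < r - l by case/andP: rl01.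
by rewrite -[_ `^ gamma]invrK -powRN lef_pV2 ?posrE ?exprn_gt0 ?powR_gt0 // ltW.
Qed.

Lemma half_rho_expr n : 0 < rho ^+ n / 2 < 1 /\ rho ^+ n / 2 < rho ^+ n.
Proof.
have rho_n_gt0 : 0 < rho ^+ n by rewrite exprn_gt0.
have : rho ^+ n <= 1 by apply: exprn_ile1 (ltW rho_gt0) rho_le1.
by split; [apply/andP; split|]; lra.
Qed.

Lemma powRN_half_rho_expr n a :
  (rho ^+ n / 2) `^ (- a) = 2 `^ (n%:R * a / gamma + a).
Proof.
rewrite powRN_div ?exprn_ge0 ?ltW ?ltr0n // rho_expr_powR pow2D.
by rewrite mulrN mulNr opprK.
Qed.

Lemma covnum_assouad_gt a c : 0 < a -> a < beta ->
  exists2 d, 0 < d < 1 & c * d `^ (- a) < covnum E d.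
Proof.
move=> a_gt0 a_lt; have two_ge1 : (1 : R) <= 2 by rewrite ler1n.
set M := (`|c| / ln 2 + a + 2) * gamma / (beta - a).
have th_gt : 1 - p < 1 by move: p_gt0; lra.
have [b [n [_ _ M_le _ nsel_n]]] := long_sel_run p_gt0 p_lt1 M th_gt (lexx 1).
have [/andP[d_gt0 d_lt1] d_lt] := half_rho_expr n.
exists (rho ^+ n / 2); first by rewrite d_gt0.
apply: lt_le_trans (covnum_cantor_ge (sel p) rho_gt0 rho_le_half d_gt0 d_lt).
rewrite count_sel_iota0 natrX -[_ ^+ nsel p n]powR_mulrn ?ler0n // powRN_half_rho_expr.
apply: lt_le_trans (ler_powR two_ge1 nsel_n); apply: mul_pow2_lt.
have ba_gt0 : 0 < (beta - a) / gamma by rewrite divr_gt0 ?subr_gt0.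
have n_ge : M <= n%:R by apply: le_trans M_le _; rewrite ler_nat leq_subr.
have := ler_wpM2r (ltW ba_gt0) n_ge.
have -> : M * ((beta - a) / gamma) = `|c| / ln 2 + a + 2.
  by rewrite /M; field; rewrite !gt_eqF ?subr_gt0 ?ln_gt0 ?ltr1n.
have -> : p * n%:R - 1 - (n%:R * a / gamma + a) = n%:R * ((beta - a) / gamma) - 1 - a.
  by field; rewrite gt_eqF.
lra.
Qed.

Lemma covnum_itv_assouad_gt th a c : 0 <= th -> th <= 1 -> 1 - p < th ->
  0 < a -> a < gamma ->
  exists d r, [/\ 0 < d < 1, 1 < r <= 2, d < r - 1, d `^ th <= r - 1 &
    c * d `^ (- a) * (r - 1) `^ a < covnum (E `&` `[1, r]) d].
Proof.
move=> th_ge0 th_le1 th_gt a_gt0 a_lt.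
set M := (`|c| / ln 2 + a + 1) * gamma / (gamma - a).
have [k [n [k_le_n k_le M_le count_kn _]]] := long_sel_run p_gt0 p_lt1 M th_gt th_le1.
have [d01 d_lt] := half_rho_expr n.
have rho_n_le_k : rho ^+ n <= rho ^+ k.
  exact: ler_wiXn2l (ltW rho_gt0) rho_le1 _ _ k_le_n.
have rho_k_gt0 : 0 < rho ^+ k by rewrite exprn_gt0.
have rho_k_le1 : rho ^+ k <= 1 by apply: exprn_ile1 (ltW rho_gt0) rho_le1.
exists (rho ^+ n / 2), (1 + rho ^+ k); rewrite [1 + _ - 1]addrAC subrr add0r.
split => //.
- by apply/andP; split; lra.
- exact: lt_le_trans d_lt rho_n_le_k.
- have d_ge0 : 0 <= rho ^+ n / 2 by case/andP: d01 => /ltW.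
  have rho_n_ge0 : 0 <= rho ^+ n by rewrite exprn_ge0 ?ltW.
  have : (rho ^+ n) `^ th <= (rho ^+ k) `^ 1.
    rewrite !rho_expr_powR; apply: ler_powR; first by rewrite ler1n.
    by rewrite lerN2 mulr1 ler_pM2r ?invr_gt0 // mulrC.
  rewrite powRr1 ?exprn_ge0 ?(ltW rho_gt0) //; apply: le_trans.
  by apply: ge0_ler_powR; rewrite ?nnegrE // (ltW d_lt).
case/andP: d01 => d_gt0 _.
apply: lt_le_trans (covnum_cantor_itv_ge (sel p) rho_gt0 rho_le_half k_le_n d_gt0 d_lt).
rewrite count_kn natrX -[_ ^+ (n - k)]powR_mulrn ?ler0n //.
rewrite powRN_half_rho_expr rho_expr_powR.
rewrite -mulrA -pow2D; apply: mul_pow2_lt.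
have ga_gt0 : 0 < (gamma - a) / gamma by rewrite divr_gt0 ?subr_gt0.
have := ler_wpM2r (ltW ga_gt0) M_le.
have -> : M * ((gamma - a) / gamma) = `|c| / ln 2 + a + 1.
  by rewrite /M; field; rewrite !gt_eqF ?subr_gt0 ?ln_gt0 ?ltr1n.
have -> : (n - k)%:R - (n%:R * a / gamma + a + - (k%:R * a / gamma)) =
    (n - k)%:R * ((gamma - a) / gamma) - a.
  by rewrite natrB //; field; rewrite gt_eqF.
lra.
Qed.

Lemma dimM_assouad_set : dimM E = beta.
Proof.
apply: inf_eq_min => [|a [a_gt0 [c c_bound]]].
  by split=> //; exists 2 => d; exact: covnum_assouad_le.
rewrite leNgt; apply/negP => a_lt.
have [d d01 lt_cov] := covnum_assouad_gt c a_gt0 a_lt.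
by have := lt_le_trans lt_cov (c_bound d d01); rewrite ltxx.
Qed.

Lemma dimA_assouad_set : dimA E = gamma.
Proof.
apply: inf_eq_min => [|a [a_gt0 [c c_bound]]].
  split=> //; exists 12 => l r l_ge1 _ r_le2 d /andP[d_gt0 d_lt].
  exact: covnum_itv_assouad_le (ltW d_lt) l_ge1 r_le2.
rewrite leNgt; apply/negP => a_lt.
have th_ge0 : 0 <= 1 - p / 2 by move: p_lt1; lra.
have th_le1 : 1 - p / 2 <= 1 by move: p_gt0; lra.
have th_gt : 1 - p < 1 - p / 2 by move: p_gt0; lra.
have [d [r [/andP[d_gt0 _] /andP[r_gt1 r_le2] d_lt _ lt_cov]]] :=
  covnum_itv_assouad_gt c th_ge0 th_le1 th_gt a_gt0 a_lt.
have := c_bound 1 r (lexx 1) r_gt1 r_le2 d; rewrite d_gt0 d_lt => /(_ isT) le_cov.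
by have := lt_le_trans lt_cov le_cov; rewrite ltxx.
Qed.

Lemma udimA_assouad_set th : 0 <= th -> 1 - p < th -> th < 1 -> udimA th E = gamma.
Proof.
move=> th_ge0 th_gt th_lt1.
apply: inf_eq_min => [|a [a_gt0 [c c_bound]]].
  split=> //; exists 12 => d /andP[d_gt0 d_lt1] l r l_ge1 _ r_le2 d_th.
  apply: covnum_itv_assouad_le => //; apply: le_trans d_th.
  by apply: ger1_powR; rewrite ?d_gt0 ?ltW.
rewrite leNgt; apply/negP => a_lt.
have [d [r [d01 /andP[r_gt1 r_le2] _ d_th lt_cov]]] :=
  covnum_itv_assouad_gt c th_ge0 (ltW th_lt1) th_gt a_gt0 a_lt.
have le_cov := c_bound d d01 1 r (lexx 1) (ltW r_gt1) r_le2 d_th.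
by have := lt_le_trans lt_cov le_cov; rewrite ltxx.
Qed.

End AssouadSet.

Theorem lemma6p1 (R : realType) :
  exists E : R -> R -> set R,
    (forall beta gamma : R, 0 < beta -> beta < gamma -> gamma <= 1 ->
       E beta gamma `<=` `[1, 2] /\ assouad_regular beta gamma (E beta gamma)) /\
    exists c : R, 1 <= c /\
      forall beta gamma : R, 0 < beta -> beta < gamma -> gamma <= 1 ->
      forall d : R, 0 < d < 1 ->
        covnum (E beta gamma) d <= c * d `^ (- beta) /\
        forall l r : R, 1 <= l -> l <= r -> r <= 2 -> d < r - l ->
          covnum (E beta gamma `&` `[l, r]) d <= c * (d / (r - l)) `^ (- gamma).
Proof.
exists (@assouad_set R); split.
  move=> beta gamma beta_gt0 beta_lt gamma_le1; split.
    exact: cantor_set_sub (assouad_rho_gt0 gamma)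
      (assouad_rho_le_half beta_gt0 beta_lt gamma_le1).
  right; split; [exact: dimM_assouad_set | exact: dimA_assouad_set |].
  by move=> th th_ge0 th_gt th_lt1; rewrite dimA_assouad_set // udimA_assouad_set.
exists 12; split; first by rewrite ler1n.
move=> beta gamma beta_gt0 beta_lt gamma_le1 d d01; split.
  apply: le_trans (covnum_assouad_le beta_gt0 beta_lt gamma_le1 d01) _.
  by rewrite ler_wpM2r ?powR_ge0 ?ler_nat.
move=> l r l_ge1 _ r_le2 d_lt; case/andP: d01 => d_gt0 _.
rewrite powRN_div ?(ltW d_gt0) ?(lt_trans d_gt0 d_lt) // mulrA.
exact: covnum_itv_assouad_le (ltW d_lt) l_ge1 r_le2.
Qed.
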